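(* Let $\mathcal C\subseteq\{0,1,2\}^n$ be a trifferent code with $|\mathcal C|\ge2$. For $x,y\in\mathcal C$ let $A(x,y)=|\{i\in[n]:x_i=y_i\}|$. Then \[ \sum_{\{x,y\}\subseteq\mathcal C,\ x\ne y}2^{A(x,y)}\ \le\ 2^{n-1}|\mathcal C| . \]
   Context: Three distinct strings $x,y,z\in\{0,1,2\}^n$ are trifferent if there is a coordinate $i\in[n]$ with $x_i,y_i,z_i$ mutually distinct. A trifferent code of block length $n$ is a subset $\mathcal C\subseteq\{0,1,2\}^n$ in which any three distinct codewords are trifferent. *)

From mathcomp Require Import all_boot.
Set Implicit Arguments. Unset Strict Implicit. Unset Printing Implicit Defensive.

Definition word (n : nat) := (n.-tuple 'I_3)%type.

Definition trifferent_triple n (x y z : word n) : bool :=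
  [exists i : 'I_n, [&& tnth x i != tnth y i, tnth y i != tnth z i & tnth x i != tnth z i]].

Definition trifferent_code n (C : {set word n}) : bool :=
  [forall x in C, forall y in C, forall z in C,
     [&& x != y, y != z & x != z] ==> trifferent_triple x y z].

Definition agree n (x y : word n) : nat := #|[set i : 'I_n | tnth x i == tnth y i]|.

(* For an unordered pair P = {x,y}: A(P) = number of coordinates on which all
   elements of P agree; for #|P| = 2 with P = {x,y} this is exactly agree x y. *)
Definition agree_pair n (P : {set word n}) : nat :=
  #|[set i : 'I_n | [forall x in P, forall y in P, tnth x i == tnth y i]]|.

From mathcomp Require Import all_boot.
Set Implicit Arguments. Unset Strict Implicit. Unset Printing Implicit Defensive.

(* Say that a word w avoids x when w_i <> x_i for every i, and double count the
   pairs (P, w) with P = {x, y} a pair of codewords and w avoiding both of them.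
   For fixed P there are exactly 2^A(x,y) such w (two free symbols where x and y
   agree, the third symbol elsewhere).  For fixed w, at most two codewords are
   avoided: three distinct avoided codewords would be trifferent at some i, and
   with w_i this would give four distinct symbols in {0,1,2}.  Hence each w is
   counted for at most one pair, and only if it avoids two codewords, so twice
   the count is at most sum_(x in C) #{w | w avoids x} = 2^n |C|. *)

(* [other a b] for [b : bool] enumerates the two symbols distinct from [a]. *)
Definition other (a : 'I_3) (b : bool) : 'I_3 := inord ((a + 1 + b) %% 3).
Definition third (a b : 'I_3) : 'I_3 := inord (3 - a - b).

Ltac case_I3 a := case: a => [[|[|[|?]]] ?] //.

Lemma val_other a b : val (other a b) = (a + 1 + b) %% 3.
Proof. by rewrite /= inordK // ltn_pmod. Qed.

Lemma other_neq a b : other a b != a.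
Proof. by rewrite -val_eqE val_other; case_I3 a; case: b. Qed.

Lemma other_inj a : injective (other a).
Proof. by move=> b c /(congr1 val); rewrite !val_other; case_I3 a; case: b; case: c. Qed.

Lemma other_eq a c : c != a -> c = other a (c == other a true).
Proof.
rewrite -val_eqE => ca; apply: val_inj; rewrite -val_eqE !val_other /=.
by move: ca; case_I3 a; case_I3 c.
Qed.

Lemma third_neq a b : a != b -> (third a b != a) && (third a b != b).
Proof.
by rewrite -val_eqE => ab; rewrite -!val_eqE /= inordK; move: ab; case_I3 a; case_I3 b.
Qed.

Lemma I3_no_fourth (d a b c : 'I_3) :
  [&& a != b, b != c & a != c] -> [&& d != a, d != b & d != c] = false.
Proof. by rewrite -!val_eqE; case_I3 a; case_I3 b; case_I3 c; case_I3 d. Qed.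

Lemma leq_halve_pow k s c : 2 * s <= 2 ^ k * c -> s <= 2 ^ k.-1 * c.
Proof.
case: k => [|k]; last by rewrite expnS -mulnA leq_mul2l.
by rewrite mul1n; apply: leq_trans; rewrite leq_pmull.
Qed.

Lemma double_count (I J : finType) (A : {set I}) (R : I -> J -> bool) :
  \sum_(a in A) #|[set b | R a b]| = \sum_b #|[set a in A | R a b]|.
Proof.
have card_sum (p : pred _) : #|[set b | p b]| = \sum_b (p b : nat).
  by rewrite -sum1_card big_mkcond; apply: eq_bigr => b _; rewrite inE; case: (p b).
under eq_bigr do rewrite card_sum.
under [RHS]eq_bigr do rewrite card_sum.
rewrite exchange_big; apply: eq_bigr => b _.
by rewrite big_mkcond; apply: eq_bigr => a _; case: (a \in A).
Qed.

Section Avoiding.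
Variable n : nat.
Implicit Types (x y w : word n) (C P : {set word n}).

Definition avoids w x := [forall i, tnth w i != tnth x i].
Definition avoiders P := [set w | [forall x in P, avoids w x]].
Definition avoided C w := [set x in C | avoids w x].
Definition pairs C := [set P : {set word n} | P \subset C & #|P| == 2].

Lemma card_avoiders1 x : #|[set w | avoids w x]| <= 2 ^ n.
Proof.
pose code w := [set i : 'I_n | tnth w i == other (tnth x i) true].
rewrite -(card_in_imset (f := code)); last first.
  move=> w1 w2; rewrite !inE => /forallP w1x /forallP w2x /setP e.
  apply: eq_from_tnth => i; rewrite (other_eq (w1x i)) (other_eq (w2x i)).
  by move: (e i); rewrite !inE => ->.
have -> : 2 ^ n = #|powerset [set: 'I_n]| by rewrite card_powerset cardsT card_ord.
by apply: subset_leq_card; apply/subsetP => T _; rewrite powersetE subsetT.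
Qed.

Lemma agree_pair2 x y : agree_pair [set x; y] = agree x y.
Proof.
apply: eq_card => i; rewrite !inE; apply/idP/idP.
  by move/forall_inP/(_ x (set21 _ _))/forall_inP/(_ y (set22 _ _)).
move=> /eqP e; apply/forall_inP => a; rewrite !inE => /orP[]/eqP->;
  by apply/forall_inP => b; rewrite !inE => /orP[]/eqP->; rewrite ?e.
Qed.

Lemma card_avoiders2 x y : 2 ^ agree x y <= #|avoiders [set x; y]|.
Proof.
pose S := [set i : 'I_n | tnth x i == tnth y i].
pose f (T : {set 'I_n}) : word n := [tuple
  if tnth x i == tnth y i then other (tnth x i) (i \in T)
  else third (tnth x i) (tnth y i) | i < n].
rewrite -card_powerset -(card_in_imset (f := f)); last first.
  move=> T1 T2; rewrite !powersetE => /subsetP T1S /subsetP T2S e.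
  apply/setP => i; have := congr1 (fun w => tnth w i) e; rewrite !tnth_mktuple.
  case: ifP => [_ /other_inj //|xy _].
  have iS : i \notin S by rewrite inE xy.
  by apply/idP/idP => iT; [move: (T1S i iT) | move: (T2S i iT)]; rewrite (negbTE iS).
apply: subset_leq_card; apply/subsetP => _ /imsetP[T _ ->].
rewrite inE; apply/forall_inP => z; rewrite !inE => zxy; apply/forallP => i.
rewrite tnth_mktuple; case: ifP => [/eqP e | /negbT /third_neq /andP[? ?]].
  by case/orP: zxy => /eqP->; rewrite ?e other_neq.
by case/orP: zxy => /eqP->.
Qed.

Lemma card_avoided C w : trifferent_code C -> #|avoided C w| <= 2.
Proof.
move=> /forall_inP tC; rewrite leqNgt; apply/negP => /card_gt2P[x [y [z]]].
rewrite !inE => -[[/andP[xC wx] /andP[yC wy] /andP[zC wz]] [xy yz zx]].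
move: (tC x xC) => /forall_inP/(_ y yC)/forall_inP/(_ z zC)/implyP.
rewrite xy yz eq_sym zx => /(_ isT).
case/existsP=> i /(I3_no_fourth (tnth w i)).
by move: wx wy wz => /forallP/(_ i) -> /forallP/(_ i) -> /forallP/(_ i) ->.
Qed.

Lemma pairs_avoided C w :
  [set P in pairs C | [forall x in P, avoids w x]] = pairs (avoided C w).
Proof.
apply/setP => P; rewrite !inE andbAC; congr (_ && _).
apply/andP/subsetP => [[/subsetP PC /forall_inP Pw] x xP | PCw].
  by rewrite inE PC ?Pw.
by split; [apply/subsetP | apply/forall_inP] => x /PCw /setIdP[].
Qed.

Lemma sum_pairs_avoiders C : trifferent_code C ->
  2 * \sum_(P in pairs C) #|avoiders P| <= 2 ^ n * #|C|.
Proof.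
move=> tC; rewrite double_count big_distrr /=.
apply: (@leq_trans (\sum_w #|avoided C w|)).
  apply: leq_sum => w _; rewrite pairs_avoided /pairs cards_draws.
  by move: (card_avoided w tC); case: #|_| => [|[|[|]]].
rewrite -(double_count C (fun x w => avoids w x)) mulnC -sum_nat_const.
by apply: leq_sum => x _; apply: card_avoiders1.
Qed.

End Avoiding.

Theorem mainTheorem12 (n : nat) (C : {set word n}) :
  trifferent_code C -> 2 <= #|C| ->
  \sum_(P in [set P : {set word n} | (P \subset C) && (#|P| == 2)])
     2 ^ agree_pair P
  <= 2 ^ (n - 1) * #|C|.
Proof.
move=> tC _.
have le2S : 2 * \sum_(P in pairs C) 2 ^ agree_pair P <= 2 ^ n * #|C|.
  apply: leq_trans (sum_pairs_avoiders tC); rewrite leq_mul2l /=.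
  apply: leq_sum => P; rewrite inE => /andP[_ /cards2P[x [y [_ ->]]]].
  by rewrite agree_pair2 card_avoiders2.
by rewrite subn1; apply: leq_halve_pow.
Qed.
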